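(* On $T^*\mathrm{Eng}(n)$, for all $i,j,k,l\in\{1,\dots,n\}$ with $i\neq j$ and $k\neq l$, $$\{L_{ij},L_{kl}\}=P_{Y_{n+1}}\big(\delta_{ik}L_{jl}+\delta_{jl}L_{ik}-\delta_{il}L_{jk}-\delta_{jk}L_{il}\big).$$
   Context: $\mathrm{Eng}(n)$ is the simply connected Lie group with Lie algebra basis $X_1,\dots,X_n,Y_0,\dots,Y_{n+1}$ whose only nontrivial brackets (up to antisymmetry) are $[X_i,Y_0]=Y_i$ and $[X_i,Y_i]=Y_{n+1}$, $i=1,\dots,n$; all viewed as left-invariant vector fields. For a vector field $X$, $P_X(\lambda)=\langle\lambda,X\rangle$ on $T^*\mathrm{Eng}(n)$. Poisson brackets (canonical symplectic form) are normalized so that $\{P_X,P_Y\}=P_{[X,Y]}$ for left-invariant $X,Y$. For $i,j\in\{1,\dots,n\}$, $L_{ij}:=P_{X_i}P_{Y_j}-P_{X_j}P_{Y_i}$ (so $L_{ii}=0$); $\delta$ is the Kronecker delta. *)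

From HB Require Import structures.
From mathcomp Require Import all_boot all_order all_algebra.
From mathcomp Require Import mpoly.
Set Implicit Arguments. Unset Strict Implicit. Unset Printing Implicit Defensive.
Import Order.TTheory GRing.Theory Num.Theory.
Local Open Scope ring_scope.

(* Lie algebra of Eng(n): basis X_1..X_n, Y_0..Y_{n+1}; dimension 2n+2.
   Basis vectors are indexed by 'I_(engdim n):
     X_i  (1 <= i <= n)   has index i-1,
     Y_j  (0 <= j <= n+1) has index n+j. *)
Definition engdim (n : nat) : nat := (n + n).+2.
Definition iX (n i : nat) : 'I_(engdim n) := inord i.-1.
Definition iY (n j : nat) : 'I_(engdim n) := inord (n + j).

(* Fiberwise polynomial functions on T^*Eng(n), in the left trivialisation
   T^*G = G x g^*: the variable 'X_a is the momentum function P_{E_a}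
   of the left-invariant basis field E_a. *)
Notation Pfun R n := {mpoly R[engdim n]}.
Definition PX (R : comNzRingType) n (i : nat) : Pfun R n := 'X_(iX n i).
Definition PY (R : comNzRingType) n (j : nat) : Pfun R n := 'X_(iY n j).

(* P_{[E_a, E_b]} for basis fields E_a, E_b: the only nonzero brackets are
   [X_i,Y_0] = Y_i and [X_i,Y_i] = Y_{n+1} (plus antisymmetry). *)
Definition Pbracket (R : comNzRingType) n (a b : 'I_(engdim n)) : Pfun R n :=
  \sum_(1 <= i < n.+1)
    ( ((a == iX n i) && (b == iY n 0))%:R * PY R n i
    - ((a == iY n 0) && (b == iX n i))%:R * PY R n i
    + ((a == iX n i) && (b == iY n i))%:R * PY R n n.+1
    - ((a == iY n i) && (b == iX n i))%:R * PY R n n.+1 ).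

(* Canonical Poisson bracket of functions on T^*G that are polynomial in the
   momenta P_{E_a} (left-invariant frame), normalised so that
   {P_X, P_Y} = P_{[X,Y]}: the Lie–Poisson bracket
   {f,g} = sum_{a,b} (df/dP_a)(dg/dP_b) P_{[E_a,E_b]}. *)
Definition poisson (R : comNzRingType) n (f g : Pfun R n) : Pfun R n :=
  \sum_(a < engdim n) \sum_(b < engdim n)
     mderiv a f * mderiv b g * @Pbracket R n a b.

Definition Lfun (R : comNzRingType) n (i j : nat) : Pfun R n :=
  PX R n i * PY R n j - PX R n j * PY R n i.

(* The bracket is antisymmetric and a derivation in each argument, so
   {L_ij, L_kl} expands into brackets {P_A, P_B} = P_[A,B] of the momenta of
   X_p and Y_q with p, q >= 1.  Among these only [X_p, Y_q] = delta_pq Y_{n+1}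
   is nonzero, so every surviving term carries the factor P_{Y_{n+1}}, and
   collecting the four Kronecker deltas gives the formula. *)

From HB Require Import structures.
From mathcomp Require Import all_boot all_order all_algebra.
From mathcomp Require Import mpoly.
From mathcomp Require Import ring zify.
Import GRing.Theory.
Local Open Scope ring_scope.

Section PoissonBracket.
Variables (R : comNzRingType) (n : nat).
Implicit Types (f g h : Pfun R n) (a b : 'I_(engdim n)).

Lemma mderivXi a b : mderiv a ('X_b : Pfun R n) = (a == b)%:R.
Proof.
rewrite mderivX mnm1E eq_sym; case: eqP => [->|_]; last by rewrite scale0r.
have -> : (U_(b) - U_(b))%MM = 0%MM by apply/mnmP => c; rewrite mnmBE mnm0E subnn.
by rewrite mpolyX0 scale1r.
Qed.

Lemma Pbracket_antisym a b : Pbracket R b a = - Pbracket R a b.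
Proof.
rewrite /Pbracket -sumrN; apply: eq_bigr => i _.
rewrite !(andbC (b == _)); ring.
Qed.

Lemma poisson_antisym f g : poisson g f = - poisson f g.
Proof.
rewrite /poisson exchange_big -sumrN; apply: eq_bigr => a _.
rewrite -sumrN; apply: eq_bigr => b _.
rewrite Pbracket_antisym; ring.
Qed.

Lemma poissonBl f g h : poisson (f - g) h = poisson f h - poisson g h.
Proof.
rewrite /poisson -sumrB; apply: eq_bigr => a _.
rewrite -sumrB; apply: eq_bigr => b _.
by rewrite mderivB !mulrBl.
Qed.

Lemma poissonMl f g h : poisson (f * g) h = f * poisson g h + g * poisson f h.
Proof.
rewrite /poisson !mulr_sumr -big_split; apply: eq_bigr => a _.
rewrite !mulr_sumr -big_split /=; apply: eq_bigr => b _.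
rewrite mderivM; ring.
Qed.

Lemma poissonBr f g h : poisson f (g - h) = poisson f g - poisson f h.
Proof. by rewrite poisson_antisym poissonBl !(poisson_antisym f) opprB opprK addrC. Qed.

Lemma poissonMr f g h : poisson f (g * h) = g * poisson f h + h * poisson f g.
Proof. by rewrite poisson_antisym poissonMl !(poisson_antisym f) !mulrN -opprD opprK. Qed.

Lemma poissonXX a b : poisson ('X_a : Pfun R n) 'X_b = Pbracket R a b.
Proof.
rewrite /poisson (bigD1 a) //= [X in _ + X]big1 => [|c /negbTE nac]; last first.
  by apply: big1 => d _; rewrite mderivXi nac !mul0r.
rewrite addr0 (bigD1 b) //= [X in _ + X]big1 => [|d /negbTE nbd]; last first.
  by rewrite !mderivXi nbd mulr0 mul0r.
by rewrite !mderivXi !eqxx !mul1r !addr0.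
Qed.

Lemma eq_iX p q : (0 < p <= n)%N -> (0 < q <= n)%N -> (iX n p == iX n q) = (p == q).
Proof. by move=> hp hq; rewrite -val_eqE /= !inordK /engdim; lia. Qed.

Lemma eq_iY p q : (p <= n)%N -> (q <= n)%N -> (iY n p == iY n q) = (p == q).
Proof. by move=> hp hq; rewrite -val_eqE /= !inordK /engdim; lia. Qed.

Lemma eq_iXY p q : (0 < p <= n)%N -> (q <= n)%N -> (iX n p == iY n q) = false.
Proof. by move=> hp hq; rewrite -val_eqE /= !inordK /engdim; lia. Qed.

Lemma eq_iYX p q : (0 < p <= n)%N -> (q <= n)%N -> (iY n q == iX n p) = false.
Proof. by move=> hp hq; rewrite eq_sym eq_iXY. Qed.

Lemma poisson_PX_PX p q : (0 < p <= n)%N -> (0 < q <= n)%N ->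
  poisson (PX R n p) (PX R n q) = 0.
Proof.
move=> hp hq; rewrite poissonXX /Pbracket big_nat_cond big1 // => i /andP[hi _].
(* [hi : 1 <= i < n.+1] is convertible to [0 < i <= n], so [//] discharges it. *)
have /andP[_ hin] := hi.
by rewrite !eq_iXY // !andbF !andFb !mul0r !subr0 addr0.
Qed.

Lemma poisson_PY_PY p q : (0 < p <= n)%N -> (0 < q <= n)%N ->
  poisson (PY R n p) (PY R n q) = 0.
Proof.
move=> /andP[_ hpn] /andP[_ hqn].
rewrite poissonXX /Pbracket big_nat_cond big1 // => i /andP[hi _].
by rewrite !eq_iYX // !andbF !andFb !mul0r !subr0 addr0.
Qed.

Lemma poisson_PX_PY p q : (0 < p <= n)%N -> (0 < q <= n)%N ->
  poisson (PX R n p) (PY R n q) = (p == q)%:R * PY R n n.+1.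
Proof.
move=> hp /andP[q_gt0 hqn].
rewrite poissonXX /Pbracket (eq_big_nat _ _
  (F2 := fun i => if i == p then (p == q)%:R * PY R n n.+1 else 0)).
  by rewrite -big_mkcond big_nat1_eq ifT.
move=> i hi; have /andP[_ hin] := hi.
rewrite !eq_iX // !eq_iY // !eq_iXY // !eq_iYX // (gtn_eqF q_gt0) [i == p]eq_sym.
by case: eqVneq => [<-|_] /=; rewrite ?andbF !mul0r !subr0 add0r // eq_sym.
Qed.

Lemma poisson_PY_PX p q : (0 < p <= n)%N -> (0 < q <= n)%N ->
  poisson (PY R n q) (PX R n p) = - ((q == p)%:R * PY R n n.+1).
Proof. by move=> hp hq; rewrite poisson_antisym poisson_PX_PY // eq_sym. Qed.

End PoissonBracket.

Theorem lemma8 (R : realFieldType) (n i j k l : nat) :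
  (1 <= i <= n)%N -> (1 <= j <= n)%N -> (1 <= k <= n)%N -> (1 <= l <= n)%N ->
  i != j -> k != l ->
  poisson (Lfun R n i j) (Lfun R n k l) =
  PY R n n.+1 *
    ( (i == k)%:R * Lfun R n j l + (j == l)%:R * Lfun R n i k
    - (i == l)%:R * Lfun R n j k - (j == k)%:R * Lfun R n i l ).
Proof.
(* The identity also holds for i = j or k = l, where both sides vanish. *)
move=> hi hj hk hl _ _; rewrite /Lfun.
rewrite !(poissonBl, poissonBr, poissonMl, poissonMr).
rewrite !poisson_PX_PX // !poisson_PY_PY // !poisson_PX_PY // !poisson_PY_PX //.
ring.
Qed.
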